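(* Let $\Gamma$ be a finite Abelian group, $S$ a symmetric multiset of elements of $\Gamma$ with $|S|=d$, and $G=\mathrm{Cay}(\Gamma,S)$. Then for every integer $t\ge0$, $$\frac{\mathrm{CP}_t}{\mathrm{CP}_{2t}} \le (2e)^{4d}.$$
   Context: A multiset $S$ of elements of $\Gamma$ is symmetric if $x$ and $-x$ have equal multiplicity for all $x$; $\mathrm{Cay}(\Gamma,S)$ has vertex set $\Gamma$ and an edge $(v,v+s)$ for every $v$ and every element $s$ of $S$ (with multiplicity). With $\mathbf{A}$ the normalized adjacency matrix of $G$ (here $\mathbf{A}=\frac1d\times$ the adjacency matrix), $\mathrm{CP}_t=\|(\tfrac12I+\tfrac12\mathbf{A})^te_0\|_2^2$ is the $t$-step lazy collision probability from the identity $0\in\Gamma$. *)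

From mathcomp Require Import all_boot all_order all_algebra.
From mathcomp Require Import all_classical all_reals all_analysis.
Set Implicit Arguments. Unset Strict Implicit. Unset Printing Implicit Defensive.
Import Order.TTheory GRing.Theory Num.Theory.
Local Open Scope ring_scope.

(* A multiset S of elements of Gamma, represented as a sequence (order
   irrelevant, multiplicities = count_mem). *)
Definition symmetric_mset (G : finZmodType) (S : seq G) : Prop :=
  forall x : G, count_mem x S = count_mem (- x) S.

(* Normalized adjacency operator of Cay(Gamma,S), d = |S|, acting on vectors
   f : Gamma -> R: (A f)(u) = (1/d) * sum_{s in S (with mult.)} f (u + s),
   i.e. the matrix-vector product with (1/d) * adjacency matrix, whose (u,v)
   entry counts the s in S with v = u + s. *)
Definition cay_adj (R : realType) (G : finZmodType) (S : seq G)
    (f : G -> R) : G -> R :=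
  fun u => (size S)%:R^-1 * \sum_(s <- S) f (u + s).

Definition lazy_op (R : realType) (G : finZmodType) (S : seq G)
    (f : G -> R) : G -> R :=
  fun u => 2^-1 * f u + 2^-1 * cay_adj S f u.

Definition e0 (R : realType) (G : finZmodType) : G -> R :=
  fun u => if u == 0 then 1 else 0.

Definition CP (R : realType) (G : finZmodType) (S : seq G) (t : nat) : R :=
  \sum_(x : G) (iter t (lazy_op S) (@e0 R G) x) ^+ 2.

From HB Require Import structures.
From mathcomp Require Import all_boot all_order all_algebra.
From mathcomp Require Import all_classical all_reals all_analysis.
From mathcomp Require Import ring lra zify.
Set Implicit Arguments. Unset Strict Implicit. Unset Printing Implicit Defensive.
Import Order.TTheory GRing.Theory Num.Theory.
Local Open Scope ring_scope.

(* Work in the group algebra R[Gamma] (convolution), ordered pointwise, and say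
   that X decays at rate r when (n+1) X^n <= (n+1+r) X^(n+1) for all n, i.e.
   when 'C(n+r,n) X^n is pointwise nondecreasing in n.  A single lazy step
   1/2 + (delta_s + delta_-s)/4 = delta_-s (1 + delta_s)^2 / 4 has explicit
   binomial powers and decays at rate 1; a convex combination of X and Y decays
   at rate r_X + r_Y, so the lazy walk operator, the average of d lazy steps,
   decays at rate d.  Then 'C(t+d,t) X^t <= 'C(2t+d,2t) X^(2t)
   <= 2^d 'C(t+d,t) X^(2t), so the walk distribution at time t is at most 2^d
   times the one at time 2t, and CP_t <= 4^d CP_2t <= (2e)^(4d) CP_2t. *)

Section GroupAlgebra.
Variables (R : comNzRingType) (G : finZmodType).

(* Values in [R^o], so that finite functions inherit the [R]-module structure. *)
Definition galg := {ffun G -> R^o}.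
HB.instance Definition _ := GRing.Lmodule.on galg.

Definition galg_one : galg := [ffun x => (x == 0)%:R].
Definition galg_mul (f g : galg) : galg := [ffun x => \sum_y f y * g (x - y)].

Lemma galg_mulC : commutative galg_mul.
Proof.
move=> f g; apply/ffunP => x; rewrite !ffunE (reindex_inj (@subrI _ x)) /=.
by apply: eq_bigr => y _; rewrite subKr mulrC.
Qed.

Lemma galg_mul1 : left_id galg_one galg_mul.
Proof.
move=> f; apply/ffunP => x; rewrite !ffunE (bigD1 0) //= big1 ?addr0.
  by rewrite ffunE eqxx mul1r subr0.
by move=> y /negPf y0; rewrite ffunE y0 mul0r.
Qed.

Lemma galg_mulDl : left_distributive galg_mul +%R.
Proof.
move=> f g h; apply/ffunP => x; rewrite !ffunE -big_split /=.
by apply: eq_bigr => y _; rewrite !ffunE mulrDl.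
Qed.

Lemma galg_mulA : associative galg_mul.
Proof.
move=> f g h; apply/ffunP => x; rewrite !ffunE.
under eq_bigr do rewrite ffunE big_distrr /=.
under [RHS]eq_bigr do rewrite ffunE big_distrl /=.
rewrite [RHS]exchange_big /=; apply: eq_bigr => z _.
rewrite [RHS](reindex_inj (addrI z)) /=.
apply: eq_bigr => w _; rewrite mulrA; congr (_ * g _ * h _).
  by rewrite (addrC z) addrK.
by rewrite opprD addrA.
Qed.

Lemma galg_one_neq0 : galg_one != 0.
Proof. by apply/eqP => /ffunP /(_ 0) /eqP; rewrite !ffunE eqxx oner_eq0. Qed.

HB.instance Definition _ := GRing.Zmodule_isComNzRing.Build galg
  galg_mulA galg_mulC galg_mul1 galg_mulDl galg_one_neq0.

Lemma galg_scaleAl (a : R) (u v : galg) : a *: (u * v) = (a *: u) * v.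
Proof.
apply/ffunP => x; rewrite !ffunE scaler_sumr.
by apply: eq_bigr => y _; rewrite !ffunE; apply: mulrA.
Qed.

HB.instance Definition _ := GRing.Lmodule_isLalgebra.Build R galg galg_scaleAl.
HB.instance Definition _ := GRing.Lalgebra_isComAlgebra.Build R galg.

Lemma galg_mulE (f g : galg) x : (f * g) x = \sum_y f y * g (x - y).
Proof. by rewrite ffunE. Qed.
Lemma galg_oneE x : (1 : galg) x = (x == 0)%:R.
Proof. by rewrite ffunE. Qed.
Lemma galg_zeroE x : (0 : galg) x = 0.
Proof. by rewrite ffunE. Qed.
Lemma galg_addE (f g : galg) x : (f + g) x = f x + g x.
Proof. by rewrite ffunE. Qed.
Lemma galg_subE (f g : galg) x : (f - g) x = f x - g x.
Proof. by rewrite !ffunE. Qed.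
Lemma galg_scaleE (a : R) (f : galg) x : (a *: f) x = a * f x.
Proof. by rewrite ffunE. Qed.
Lemma galg_mulrnE (f : galg) n x : (f *+ n) x = f x *+ n.
Proof. by elim: n => [|n IH]; rewrite ?mulr0n ?galg_zeroE // !mulrS galg_addE IH. Qed.
Lemma galg_sumE I (r : seq I) (P : pred I) (F : I -> galg) x :
  (\sum_(i <- r | P i) F i) x = \sum_(i <- r | P i) F i x.
Proof.
elim: r => [|a r IH]; first by rewrite !big_nil galg_zeroE.
by rewrite !big_cons; case: (P a); rewrite ?galg_addE IH.
Qed.

Definition delta (u : G) : galg := [ffun x => (x == u)%:R].

Lemma deltaE u x : delta u x = (x == u)%:R.
Proof. by rewrite ffunE. Qed.

Lemma delta0 : delta 0 = 1.
Proof. by apply/ffunP => x; rewrite !ffunE. Qed.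

Lemma delta_mulE u (f : galg) x : (delta u * f) x = f (x - u).
Proof.
rewrite galg_mulE (bigD1 u) //= big1 ?addr0; first by rewrite deltaE eqxx mul1r.
by move=> y /negPf yu; rewrite deltaE yu mul0r.
Qed.

Lemma deltaD u v : delta u * delta v = delta (u + v).
Proof. by apply/ffunP => x; rewrite delta_mulE !deltaE subr_eq addrC. Qed.

Lemma deltaMn u k : delta u ^+ k = delta (u *+ k).
Proof. by elim: k => [|k IH]; rewrite ?expr0 ?mulr0n ?delta0 // exprS IH deltaD mulrS. Qed.

End GroupAlgebra.

Arguments delta {R G} u.

Section PointwiseOrder.
Variables (R : numDomainType) (G : finZmodType).
Local Notation galg := (galg R G).

Definition nng (f : galg) := forall x, 0 <= f x :> R.
Definition gle (f g : galg) := nng (g - f).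

Lemma nng0 : nng 0. Proof. by move=> x; rewrite galg_zeroE. Qed.
Lemma nng1 : nng 1. Proof. by move=> x; rewrite galg_oneE ler0n. Qed.
Lemma nngD f g : nng f -> nng g -> nng (f + g).
Proof. by move=> hf hg x; rewrite galg_addE addr_ge0. Qed.
Lemma nngM f g : nng f -> nng g -> nng (f * g).
Proof. by move=> hf hg x; rewrite galg_mulE sumr_ge0 // => y _; rewrite mulr_ge0. Qed.
Lemma nngZ a f : 0 <= a -> nng f -> nng (a *: f).
Proof. by move=> ha hf x; rewrite galg_scaleE mulr_ge0. Qed.
Lemma nngMn f n : nng f -> nng (f *+ n).
Proof. by move=> hf x; rewrite galg_mulrnE mulrn_wge0. Qed.

Lemma nngX f n : nng f -> nng (f ^+ n).
Proof.
by move=> hf; elim: n => [|n IH]; [rewrite expr0; apply: nng1 | rewrite exprS; apply: nngM].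
Qed.

Lemma nng_sum I (r : seq I) (P : pred I) (F : I -> galg) :
  (forall i, P i -> nng (F i)) -> nng (\sum_(i <- r | P i) F i).
Proof. by move=> h x; rewrite galg_sumE sumr_ge0 // => i /h. Qed.

Lemma nng_delta u : nng (delta u : galg).
Proof. by move=> x; rewrite deltaE ler0n. Qed.

Lemma gle_refl f : gle f f.
Proof. by rewrite /gle subrr; exact: nng0. Qed.

Lemma gle_trans f g h : gle f g -> gle g h -> gle f h.
Proof. by move=> fg gh; rewrite /gle -(subrK g h) -addrA; apply: nngD. Qed.

Lemma gle_wpDr f g h : nng h -> gle f g -> gle f (g + h).
Proof. by move=> nh fg; rewrite /gle addrAC; apply: nngD. Qed.

Lemma gle_wpDl f g h : nng h -> gle f g -> gle f (h + g).
Proof. by rewrite addrC; apply: gle_wpDr. Qed.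

Lemma gleD f1 f2 g1 g2 : gle f1 g1 -> gle f2 g2 -> gle (f1 + f2) (g1 + g2).
Proof. by move=> h1 h2; rewrite /gle opprD addrACA; apply: nngD. Qed.

Lemma gle_sum I (r : seq I) (P : pred I) (F F' : I -> galg) :
  (forall i, P i -> gle (F i) (F' i)) ->
  gle (\sum_(i <- r | P i) F i) (\sum_(i <- r | P i) F' i).
Proof. by move=> h; rewrite /gle -sumrB; apply: nng_sum. Qed.

Lemma gleMr f g h : gle f g -> nng h -> gle (f * h) (g * h).
Proof. by move=> fg nh; rewrite /gle -mulrBl; apply: nngM. Qed.

Lemma gleZ a f g : 0 <= a -> gle f g -> gle (a *: f) (a *: g).
Proof. by move=> a_ge0 fg; rewrite /gle -scalerBr; apply: nngZ. Qed.

Lemma gleZl (a b : R) f : a <= b -> nng f -> gle (a *: f) (b *: f).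
Proof. by move=> ab nf; rewrite /gle -scalerBl; apply: nngZ; rewrite // subr_ge0. Qed.

Lemma gleMn f g n : gle f g -> gle (f *+ n) (g *+ n).
Proof. by move=> fg; rewrite /gle -mulrnBl; apply: nngMn. Qed.

Lemma gleMn2r f g n : gle (f *+ n.+1) (g *+ n.+1) -> gle f g.
Proof. by move=> h x; have := h x; rewrite !galg_subE !galg_mulrnE -mulrnBl pmulrn_lge0. Qed.

Lemma gleE f g : gle f g -> forall x, f x <= g x :> R.
Proof. by move=> fg x; have := fg x; rewrite galg_subE subr_ge0. Qed.

Lemma gle_scale_mulr (f g h : galg) (c : R) (a b : nat) :
  0 <= c -> nng h -> gle (f *+ a) (g *+ b) ->
  gle ((c *: (f * h)) *+ a) ((c *: (g * h)) *+ b).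
Proof. by move=> c_ge0 nh fg; rewrite !scalerMnr -!mulrnAl; apply/gleZ/gleMr. Qed.

Lemma gle_sum_shift m (F F' : nat -> galg) :
  (forall k, (k < m)%N -> gle (F' k) (F k.+1)) -> (forall k, nng (F k)) ->
  gle (\sum_(k < m) F' k) (\sum_(k < m.+2) F k).
Proof.
move=> FF' F_ge0; rewrite big_ord_recl big_ord_recr /=.
apply/gle_wpDl/gle_wpDr => //; apply: gle_sum => k _; exact: FF'.
Qed.

End PointwiseOrder.

Definition pow_decay (R : numDomainType) (G : finZmodType) (X : galg R G) (r : nat) :=
  forall n, gle (X ^+ n *+ n.+1) (X ^+ n.+1 *+ (n.+1 + r)).

Section DecayConvex.
Variables (R : numDomainType) (G : finZmodType).
Variables (A B : galg R G) (rA rB : nat) (p q : R).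
Hypotheses (A_ge0 : nng A) (B_ge0 : nng B) (p_ge0 : 0 <= p) (q_ge0 : 0 <= q).
Hypotheses (decA : pow_decay A rA) (decB : pow_decay B rB).

Let term m i := ('C(m, i)%:R * p ^+ (m - i) * q ^+ i) *: (A ^+ (m - i) * B ^+ i).

Let expansion m : (p *: A + q *: B) ^+ m = \sum_(i < m.+1) term m i.
Proof.
rewrite exprDn; apply: eq_bigr => i _.
by rewrite !exprZn -scalerAl -scalerAr scalerA -scaler_nat scalerA mulrA.
Qed.

Let term_ge0 m i : nng (term m i).
Proof. by apply: nngZ; [rewrite !mulr_ge0 ?exprn_ge0 | apply/nngM; apply/nngX]. Qed.

(* The decay inequality of [A] at exponent [n - i], scaled by
   ['C(n+1, i) p^(n+1-i) q^i B^i]; symmetrically for [B] below. *)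
Let termA_step n i : (i <= n)%N ->
  gle ((p *: term n i) *+ n.+1) (term n.+1 i *+ ((n - i).+1 + rA)).
Proof.
move=> le_in; rewrite /term subSn //; set j := (n - i)%N.
have binE : (n.+1 * 'C(n, i) = j.+1 * 'C(n.+1, i))%N.
  by rewrite (mul_bin_down n.+1 i) subSn.
have cE : (p * ('C(n, i)%:R * p ^+ j * q ^+ i)) *+ n.+1
    = ('C(n.+1, i)%:R * p ^+ j.+1 * q ^+ i) *+ j.+1 :> R.
  rewrite -[LHS]mulr_natr -[RHS]mulr_natr exprS.
  transitivity (p * p ^+ j * q ^+ i * (n.+1 * 'C(n, i))%:R); first by rewrite natrM; ring.
  by rewrite binE natrM; ring.
rewrite scalerA scalerMnl cE -scalerMnl.
apply: gle_scale_mulr (decA j); last exact: nngX.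
by rewrite !mulr_ge0 ?exprn_ge0 ?ler0n.
Qed.

Let termB_step n i : (i <= n)%N ->
  gle ((q *: term n i) *+ n.+1) (term n.+1 i.+1 *+ (i.+1 + rB)).
Proof.
move=> le_in; rewrite /term subSS; set j := (n - i)%N.
have binE : (n.+1 * 'C(n, i) = i.+1 * 'C(n.+1, i.+1))%N by rewrite mul_bin_diag.
have cE : (q * ('C(n, i)%:R * p ^+ j * q ^+ i)) *+ n.+1
    = ('C(n.+1, i.+1)%:R * p ^+ j * q ^+ i.+1) *+ i.+1 :> R.
  rewrite -[LHS]mulr_natr -[RHS]mulr_natr exprS.
  transitivity (q * p ^+ j * q ^+ i * (n.+1 * 'C(n, i))%:R); first by rewrite natrM; ring.
  by rewrite binE natrM; ring.
rewrite scalerA scalerMnl cE -scalerMnl ![A ^+ j * _]mulrC.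
apply: gle_scale_mulr (decB i); last exact: nngX.
by rewrite !mulr_ge0 ?exprn_ge0 ?ler0n.
Qed.

Lemma pow_decay_convex : p + q = 1 -> pow_decay (p *: A + q *: B) (rA + rB).
Proof.
move=> pq1 n; rewrite !expansion -!sumrMnl.
apply: (@gle_trans _ _ _ (\sum_(i < n.+1)
   (term n.+1 i *+ ((n - i).+1 + rA) + term n.+1 i.+1 *+ (i.+1 + rB)))).
  apply: gle_sum => i _; have le_in : (i <= n)%N by rewrite -ltnS.
  rewrite -[term n i]scale1r -pq1 scalerDl mulrnDl.
  by apply: gleD; [apply: termA_step | apply: termB_step].
have splitE (i : 'I_n.+2) : term n.+1 i *+ (n.+1 + (rA + rB))
    = term n.+1 i *+ (n.+1 - i + rA) + term n.+1 i *+ (i + rB).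
  by rewrite -mulrnDr addnACA subnK // -ltnS.
rewrite (eq_bigr _ (fun i _ => splitE i)) !big_split /=; apply: gleD.
  rewrite [X in gle _ X]big_ord_recr /=; apply: gle_wpDr; first exact/nngMn/term_ge0.
  by under [X in gle _ X]eq_bigr => i _ do rewrite (@subSn i n (ltn_ord i)); apply: gle_refl.
rewrite [X in gle _ X]big_ord_recl /=; apply: gle_wpDl; first exact/nngMn/term_ge0.
exact: gle_refl.
Qed.

End DecayConvex.

Lemma leq_bin_doubleS n k : (k <= n.*2)%N ->
  (4 * n.+1 * 'C(n.*2, k) <= n.+2 * 'C(n.*2.+2, k.+1))%N.
Proof.
move=> le_k2n.
have e1 := mul_bin_diag n.*2.+2 k; have e2 := mul_bin_down n.*2.+1 k.
rewrite /= in e1 e2; set m := (n.*2.+1 - k)%N in e2.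
have km : (k.+1 + m = n.*2.+2)%N by rewrite addSn subnKC // ltnW.
have km_gt0 : (0 < k.+1 * m)%N by rewrite muln_gt0 subn_gt0 ltnS.
have amgm : (2 * (k.+1 * m) <= n.+2 * n.*2.+1)%N.
  have : (0 <= (k.+1%:Z - m%:Z) ^+ 2)%R by exact: sqr_ge0.
  rewrite -!muln2 in km *; nia.
have prodE : (n.+2 * 'C(n.*2.+2, k.+1) * (k.+1 * m)
              = n.+2 * n.*2.+2 * n.*2.+1 * 'C(n.*2, k))%N.
  transitivity (n.+2 * (k.+1 * 'C(n.*2.+2, k.+1)) * m)%N; first ring.
  rewrite -e1; transitivity (n.+2 * n.*2.+2 * (m * 'C(n.*2.+1, k)))%N; first ring.
  by rewrite -e2; ring.
rewrite -(leq_pmul2r km_gt0) prodE.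
have := leq_mul (leqnn (2 * n.+1 * 'C(n.*2, k))) amgm.
rewrite -!muln2; lia.
Qed.

Lemma leq_bin_double t r : ('C(t + t + r, t + t) <= 2 ^ r * 'C(t + r, t))%N.
Proof.
elim: r => [|r IH]; first by rewrite !addn0 !binn.
have e1 := mul_bin_down (t + t + r.+1) (t + t).
have e2 := mul_bin_down (t + r.+1) t.
rewrite !addnS /= in e1 e2.
rewrite (_ : ((t + t + r).+1 - (t + t) = r.+1)%N) in e1; last lia.
rewrite (_ : ((t + r).+1 - t = r.+1)%N) in e2; last lia.
rewrite -(leq_pmul2l (ltn0Sn r)) !addnS -e1.
apply: (@leq_trans ((t + t + r).+1 * (2 ^ r * 'C(t + r, t)))).
  exact: leq_mul (leqnn _) IH.
have -> : (r.+1 * (2 ^ r.+1 * 'C((t + r).+1, t))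
          = 2 ^ r * 2 * ((t + r).+1 * 'C(t + r, t)))%N.
  by rewrite e2 expnS; ring.
nia.
Qed.

Section DecayDoubling.
Variables (R : numDomainType) (G : finZmodType) (X : galg R G) (r : nat).
Hypotheses (X_ge0 : nng X) (decX : pow_decay X r).

Lemma pow_decay_bin_mono n :
  gle (X ^+ n *+ 'C(n + r, n)) (X ^+ n.+1 *+ 'C(n.+1 + r, n.+1)).
Proof.
apply: (@gleMn2r _ _ _ _ n); rewrite -!mulrnA.
rewrite (mulnC 'C(n.+1 + r, n.+1)) -[(n.+1 * _)%N]mul_bin_diag /=.
by rewrite (mulnC 'C(n + r, n)) !mulrnA; apply: gleMn.
Qed.

Lemma pow_decay_double t x : (X ^+ t) x <= (2 ^ r)%:R * (X ^+ (t + t)) x.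
Proof.
have mono j : gle (X ^+ t *+ 'C(t + r, t)) (X ^+ (t + j) *+ 'C(t + j + r, t + j)).
  elim: j => [|j IH]; first by rewrite addn0; apply: gle_refl.
  by rewrite addnS; apply: gle_trans IH (pow_decay_bin_mono _).
have C_gt0 : 0 < 'C(t + r, t)%:R :> R by rewrite ltr0n bin_gt0 leq_addr.
have := gleE (mono t) x; rewrite !galg_mulrnE.
rewrite -[(X ^+ t) x *+ _]mulr_natr -[(X ^+ (t + t)) x *+ _]mulr_natr => h.
rewrite -(ler_pM2r C_gt0); apply: le_trans h _.
rewrite (mulrC (2 ^ r)%:R) -mulrA; apply: ler_wpM2l; first exact: nngX _ X_ge0 x.
by rewrite -natrM ler_nat leq_bin_double.
Qed.

End DecayDoubling.

Section LazyStep.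
Variables (R : numFieldType) (G : finZmodType).
Local Notation galg := (galg R G).

Definition lazy_step (s : G) : galg := 2^-1 *: 1 + 4^-1 *: (delta s + delta (- s)).

Lemma lazy_step_factor s :
  lazy_step s = 4^-1 *: (delta (- s) * (1 + delta s) ^+ 2).
Proof.
have -> : delta (- s) * (1 + delta s) ^+ 2
          = (2 : R) *: 1 + (delta s + delta (- s)) :> galg.
  rewrite sqrrD expr1n mul1r deltaMn !mulrDr mulr1 !deltaD addNr delta0.
  by rewrite scaler_nat mulr2n addKr; ring.
by rewrite /lazy_step [RHS]scalerDr scalerA; congr (_ *: _ + _); field.
Qed.

Lemma nng_lazy_step s : nng (lazy_step s).
Proof.
rewrite lazy_step_factor; apply: nngZ; first by rewrite invr_ge0 ler0n.
by apply/nngM; [apply: nng_delta | apply/nngX/nngD; [apply: nng1 | apply: nng_delta]].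
Qed.

Definition lazy_coef (n k : nat) : R := 'C(n.*2, k)%:R / 4 ^+ n.

Lemma lazy_coef_ge0 n k : 0 <= lazy_coef n k.
Proof. by rewrite divr_ge0 ?exprn_ge0. Qed.

Lemma lazy_stepX s n :
  lazy_step s ^+ n = \sum_(k < n.*2.+1) lazy_coef n k *: delta (s *+ k - s *+ n).
Proof.
rewrite lazy_step_factor exprZn exprMn deltaMn -exprM exprDn -muln2 mulnC.
rewrite mulr_sumr scaler_sumr; apply: eq_bigr => k _.
rewrite expr1n mul1r deltaMn mulrnAr deltaD -scaler_nat scalerA.
by rewrite /lazy_coef exprVn mulrC -muln2 addrC mulNrn.
Qed.

Lemma lazy_coef_succ n k : (k <= n.*2)%N ->
  n.+1%:R * lazy_coef n k <= n.+2%:R * lazy_coef n.+1 k.+1.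
Proof.
move=> le_k2n; have pow4_gt0 : 0 < (4 : R) ^+ n.+1 by rewrite exprn_gt0.
have -> : n.+1%:R * lazy_coef n k = (4 * n.+1 * 'C(n.*2, k))%:R / 4 ^+ n.+1.
  by rewrite /lazy_coef exprS !natrM; field; rewrite expf_neq0 ?pnatr_eq0.
rewrite /lazy_coef mulrA ler_pM2r ?invr_gt0 // -natrM ler_nat.
exact: leq_bin_doubleS.
Qed.

Lemma pow_decay_lazy_step s : pow_decay (lazy_step s) 1.
Proof.
move=> n; rewrite !lazy_stepX -!sumrMnl.
apply: (@gle_sum_shift _ _ _
  (fun k => (lazy_coef n.+1 k *: delta (s *+ k - s *+ n.+1)) *+ (n.+1 + 1))
  (fun k => (lazy_coef n k *: delta (s *+ k - s *+ n)) *+ n.+1)).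
  move=> k lt_k2n; rewrite !scalerMnl addn1.
  have -> : s *+ k.+1 - s *+ n.+1 = s *+ k - s *+ n.
    by rewrite !mulrS opprD addrACA subrr add0r.
  apply: gleZl; last exact: nng_delta.
  by rewrite -[_ *+ n.+1]mulr_natl -[_ *+ n.+2]mulr_natl lazy_coef_succ // -ltnS.
by move=> k; apply/nngMn/nngZ; [apply: lazy_coef_ge0 | apply: nng_delta].
Qed.

End LazyStep.

Arguments lazy_step {R G} s.

Section LazyWalk.
Variables (R : numFieldType) (G : finZmodType).
Local Notation galg := (galg R G).

Definition lazy_walk (S : seq G) : galg := (size S)%:R^-1 *: \sum_(s <- S) lazy_step s.

Lemma nng_lazy_walk S : nng (lazy_walk S).
Proof.
apply: nngZ; first by rewrite invr_ge0 ler0n.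
by apply: nng_sum => s _; apply: nng_lazy_step.
Qed.

Lemma pow_decay_lazy_walk S : S != [::] -> pow_decay (lazy_walk S) (size S).
Proof.
elim: S => [//|s [|s' S'] IH] _.
  by rewrite /lazy_walk big_seq1 invr1 scale1r; apply: pow_decay_lazy_step.
set S := s' :: S' in IH *; set k := size S.
have k_neq0 : k%:R != 0 :> R by rewrite pnatr_eq0.
have -> : lazy_walk (s :: S) = k.+1%:R^-1 *: lazy_step s + (k%:R / k.+1%:R) *: lazy_walk S.
  rewrite /lazy_walk big_cons scalerDr scalerA /=; congr (_ + _ *: _).
  by rewrite mulrAC divff // mul1r.
rewrite (_ : size (s :: S) = 1 + k)%N //; apply: pow_decay_convex.
- exact: nng_lazy_step.
- exact: nng_lazy_walk.
- by rewrite invr_ge0 ler0n.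
- by rewrite divr_ge0 ?ler0n.
- exact: pow_decay_lazy_step.
- exact: IH.
- by field.
Qed.

End LazyWalk.

Arguments lazy_walk {R G} S.

Lemma sum_symmetric_mset (V : nmodType) (G : finZmodType) (S : seq G) (F : G -> V) :
  symmetric_mset S -> \sum_(s <- S) F (- s) = \sum_(s <- S) F s.
Proof.
move=> symS; rewrite -(big_map (fun s => - s) predT F).
apply/perm_big/allP => x _ /=; rewrite count_map symS.
by apply/eqP/eq_count => y /=; rewrite eqr_oppLR.
Qed.

Section CollisionProbability.
Variables (R : realType) (G : finZmodType).
Local Notation galg := (galg R G).

(* Convolution by [delta s] reads [f (u - s)] while [lazy_op] reads [f (u + s)];
   the symmetry of [S] reconciles the two. *)
Lemma lazy_op_walk (S : seq G) (f : G -> R) u : symmetric_mset S -> S != [::] ->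
  lazy_op S f u = (lazy_walk S * [ffun y => f y] : galg) u.
Proof.
move=> symS S_neq0; have d_neq0 : (size S)%:R != 0 :> R by rewrite pnatr_eq0 size_eq0.
rewrite /lazy_walk -scalerAl galg_scaleE mulr_suml galg_sumE.
under eq_bigr do rewrite mulrDl -!scalerAl mul1r mulrDl galg_addE !galg_scaleE
  galg_addE !delta_mulE !ffunE opprK.
rewrite big_split /= big_const_seq count_predT iter_addr_0 -big_distrr /= big_split /=.
rewrite (sum_symmetric_mset (fun s => f (u + s)) symS) /lazy_op /cay_adj.
by rewrite -[_ *+ size S]mulr_natr mul1r; field.
Qed.

Lemma iter_lazy_op (S : seq G) t : symmetric_mset S -> S != [::] ->
  iter t (lazy_op S) (@e0 R G) =1 (lazy_walk S ^+ t : galg).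
Proof.
move=> symS S_neq0; elim: t => [|t IH] x.
  by rewrite expr0 /e0 ffunE /=; case: (x == 0).
rewrite iterS lazy_op_walk //.
have -> : [ffun y => iter t (lazy_op S) (@e0 R G) y] = lazy_walk S ^+ t.
  by apply/ffunP => y; rewrite ffunE IH.
by rewrite exprS.
Qed.

Lemma CP_le_CP_double (S : seq G) t : symmetric_mset S -> S != [::] ->
  CP R S t <= 4 ^+ size S * CP R S (t + t).
Proof.
move=> symS S_neq0; rewrite /CP mulr_sumr; apply: ler_sum => x _.
have walk_ge0 : nng (lazy_walk S : galg) by apply: nng_lazy_walk.
have four : (4 : R) ^+ size S = (2 ^ size S)%:R ^+ 2.
  by rewrite natrX -exprM mulnC exprM expr2 -natrM.
rewrite !iter_lazy_op // four -exprMn lerXn2r ?nnegrE ?mulr_ge0 ?ler0n ?(nngX _ walk_ge0) //.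
exact: pow_decay_double walk_ge0 (pow_decay_lazy_walk R S_neq0) t x.
Qed.

End CollisionProbability.

Theorem lemma4p4 (R : realType) (G : finZmodType) (S : seq G) (d : nat)
    (hS : symmetric_mset S) (hd : size S = d) (hd0 : (0 < d)%N) (t : nat) :
  CP R S t / CP R S (2 * t) <= (2 * expR 1) ^+ (4 * d).
Proof.
have S_neq0 : S != [::] by rewrite -size_eq0 hd -lt0n.
have CP_ge0 n : 0 <= CP R S n by apply: sumr_ge0 => x _; apply: sqr_ge0.
have four_le : (4 : R) ^+ d <= (2 * expR 1) ^+ (4 * d).
  have e_ge4 : 4 <= 2 * expR 1 :> R by have := expR_ge1Dx (1 : R); lra.
  rewrite exprM lerXn2r ?nnegrE ?exprn_ge0 //.
  move: (2 * expR 1) e_ge4 => y y_ge4; apply/(le_trans y_ge4).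
  by rewrite -[X in X <= _]expr1 ler_eXn2l // (lt_le_trans _ y_ge4) ?ltr1n.
have [CP2t_eq0|CP2t_neq0] := eqVneq (CP R S (2 * t)) 0.
  by rewrite CP2t_eq0 invr0 mulr0 (le_trans _ four_le) ?exprn_ge0.
rewrite ler_pdivrMr ?lt_def ?CP2t_neq0 ?CP_ge0 // mul2n -addnn.
apply: le_trans (CP_le_CP_double R t hS S_neq0) _.
by rewrite hd ler_wpM2r.
Qed.
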